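(* Let $F$ be a nondyadic nonarchimedean local field, $A$ a quaternion $F$-algebra, and $\mathcal O$ a Bass order in $A$ with Eichler invariant $e(\mathcal O)=0$ and $n(\mathcal O)\ge3$. Let $K/F$ be the unique (ramified) quadratic field extension such that $O_K$ embeds into $\mathcal O$, and assume $\mathrm{Nr}(\mathcal N(\mathcal O))=\mathrm{Nm}_{K/F}(K^\times)$. Let $B=O_K$, fix an optimal embedding $\varphi\in\mathrm{Emb}(B,\mathcal O)$, and let $\mathcal E=\{g\in A^\times:\varphi(K)\cap g\mathcal O g^{-1}=\varphi(B)\}$. Then $\mathrm{Nr}(\mathcal E)=\mathrm{Nm}_{K/F}(K^\times)$.
   Context: Nondyadic: residue characteristic $\ne2$. An order is Bass if every overorder (including itself) is Gorenstein (trace dual projective as left module). $n(\mathcal O)$ is the valuation of the reduced discriminant. With $\mathfrak k$ the residue field, the Eichler invariant of $\mathcal O\not\simeq M_2(O_F)$ is $1,0,-1$ according as $\mathcal O/J(\mathcal O)$ is $\mathfrak k\times\mathfrak k$, $\mathfrak k$, or the quadratic field extension of $\mathfrak k$. $\mathcal N(\mathcal O)$ is the normalizer of $\mathcal O$ in $A^\times$; $\mathrm{Nr}$ is the reduced norm. An optimal embedding of an order $B\subset K$ into $\mathcal O$ is an $F$-embedding $\varphi:K\to A$ with $\varphi(K)\cap\mathcal O=\varphi(B)$; $\mathrm{Emb}(B,\mathcal O)$ is their set. *)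

From mathcomp Require Import all_boot all_order all_algebra.
Set Implicit Arguments. Unset Strict Implicit. Unset Printing Implicit Defensive.
Import Order.TTheory GRing.Theory Num.Theory.
Local Open Scope ring_scope.

Section LocalQuat.
Variable F : fieldType.

Variable v : F -> int.   (* discrete valuation on F^x; v 0 is irrelevant *)

Definition OF (x : F) : Prop := x = 0 \/ 0 <= v x.
Definition mF (x : F) : Prop := x = 0 \/ 0 < v x.

Definition discrete_valuation : Prop :=
  (forall x y, x != 0 -> y != 0 -> v (x * y) = v x + v y) /\
  (forall x y, x != 0 -> y != 0 -> x + y != 0 ->
       Num.min (v x) (v y) <= v (x + y)) /\
  (exists pi, pi != 0 /\ v pi = 1).

Definition vclose (N : int) (x y : F) : Prop := x = y \/ N <= v (x - y).

Definition vcomplete : Prop :=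
  forall u : nat -> F,
    (forall N : int, exists M, forall m n, (M <= m)%N -> (M <= n)%N ->
        vclose N (u m) (u n)) ->
    exists l, forall N : int, exists M, forall n, (M <= n)%N -> vclose N (u n) l.

Definition finite_residue : Prop :=
  exists s : seq F, forall x, OF x -> exists2 r, r \in s & mF (x - r).

Definition nonarch_local_field : Prop :=
  [/\ discrete_valuation, vcomplete & finite_residue].

(* residue characteristic <> 2, i.e. 2 is not in m_F *)
Definition nondyadic : Prop := ~ mF 2.

(* elements t + x i + y j + z ij are row vectors (t,x,y,z) *)
Variables a b : F.
Local Notation A := 'rV[F]_4.

Definition qc (q : A) (k : nat) : F := q ord0 (inord k).
Definition mkq (t x y z : F) : A := \row_(k < 4) nth 0 [:: t; x; y; z] k.
Definition q1 : A := mkq 1 0 0 0.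

(* i^2 = a, j^2 = b, ij = -ji *)
Definition qmul (p q : A) : A :=
  mkq (qc p 0 * qc q 0 + a * qc p 1 * qc q 1 + b * qc p 2 * qc q 2
         - a * b * qc p 3 * qc q 3)
      (qc p 0 * qc q 1 + qc p 1 * qc q 0 - b * qc p 2 * qc q 3
         + b * qc p 3 * qc q 2)
      (qc p 0 * qc q 2 + qc p 2 * qc q 0 + a * qc p 1 * qc q 3
         - a * qc p 3 * qc q 1)
      (qc p 0 * qc q 3 + qc p 3 * qc q 0 + qc p 1 * qc q 2
         - qc p 2 * qc q 1).

Definition qconj (q : A) : A := mkq (qc q 0) (- qc q 1) (- qc q 2) (- qc q 3).
(* reduced norm q * conj q and reduced trace q + conj q (as scalars) *)
Definition nrd (q : A) : F :=
  qc q 0 ^+ 2 - a * qc q 1 ^+ 2 - b * qc q 2 ^+ 2 + a * b * qc q 3 ^+ 2.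
Definition trd (q : A) : F := 2 * qc q 0.

Fixpoint qpow (q : A) (n : nat) : A :=
  if n is n'.+1 then qmul q (qpow q n') else q1.

Definition is_Obasis (O : A -> Prop) (e : 'I_4 -> A) : Prop :=
  (forall c : 'I_4 -> F, \sum_i c i *: e i = 0 -> forall i, c i = 0) /\
  (forall x, O x <-> exists c : 'I_4 -> F,
                      (forall i, OF (c i)) /\ x = \sum_i c i *: e i).

Definition is_order (O : A -> Prop) : Prop :=
  (exists e, is_Obasis O e) /\ O q1 /\
  (forall x y, O x -> O y -> O (qmul x y)).

Definition tdual (O : A -> Prop) (x : A) : Prop :=
  forall y, O y -> OF (trd (qmul x y)).

(* P is a (finitely generated) projective left O-module: a direct summand of
   O^n, i.e. there are left O-linear f : P -> O^n and g : O^n -> P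
   (g(w) = sum_i w_i p_i) with g o f = id_P. *)
Definition left_projective (O P : A -> Prop) : Prop :=
  exists n (p : 'I_n -> A) (f : A -> 'I_n -> A),
    (forall i, P (p i)) /\
    (forall x i, P x -> O (f x i)) /\
    (forall x y i, P x -> P y -> f (x + y) i = f x i + f y i) /\
    (forall r x i, O r -> P x -> f (qmul r x) i = qmul r (f x i)) /\
    (forall x, P x -> x = \sum_i qmul (f x i) (p i)).

Definition Gorenstein (O : A -> Prop) : Prop := left_projective O (tdual O).

Definition Bass (O : A -> Prop) : Prop :=
  is_order O /\
  forall O', is_order O' -> (forall x, O x -> O' x) -> Gorenstein O'.

Definition left_ideal (O I : A -> Prop) : Prop :=
  (forall x, I x -> O x) /\ I 0 /\ (forall x y, I x -> I y -> I (x - y)) /\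
  (forall r x, O r -> I x -> I (qmul r x)).

Definition max_left_ideal (O I : A -> Prop) : Prop :=
  left_ideal O I /\ (exists x, O x /\ ~ I x) /\
  (forall I', left_ideal O I' -> (forall x, I x -> I' x) ->
      (exists x, O x /\ ~ I' x) -> forall x, I' x -> I x).

Definition jac (O : A -> Prop) (x : A) : Prop :=
  O x /\ forall I, max_left_ideal O I -> I x.

(* e(O) = 0 : O / J(O) is isomorphic to the residue field O_F/m_F, i.e. there
   is a surjective unital ring homomorphism O -> O_F/m_F with kernel J(O)
   (psi picks a representative in O_F). *)
Definition eichler_zero (O : A -> Prop) : Prop :=
  exists psi : A -> F,
    (forall x, O x -> OF (psi x)) /\
    (forall x y, O x -> O y -> mF (psi (x + y) - (psi x + psi y))) /\
    (forall x y, O x -> O y -> mF (psi (qmul x y) - psi x * psi y)) /\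
    mF (psi q1 - 1) /\
    (forall c, OF c -> exists x, O x /\ mF (psi x - c)) /\
    (forall x, O x -> (mF (psi x) <-> jac O x)).

(* n(O) = n : disc(O) = det(trd(e_i e_j)) O_F = d(O)^2 with v(d(O)) = n *)
Definition nrd_disc_val (O : A -> Prop) (n : int) : Prop :=
  exists e, is_Obasis O e /\
    \det (\matrix_(i, j) trd (qmul (e i) (e j))) != 0 /\
    v (\det (\matrix_(i, j) trd (qmul (e i) (e j)))) = 2 * n.

(* an F-embedding phi : K -> A is determined by u = phi(sqrt d), u^2 = d *)
Definition phiK (u : A) (x : A) : Prop := exists s t : F, x = s *: q1 + t *: u.

Definition integral (x : A) : Prop :=
  exists c : seq F, (forall i, (i < size c)%N -> OF c`_i) /\
    qpow x (size c) + \sum_(i < size c) c`_i *: qpow x i = 0.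

(* phi(K) /\ O = phi(O_K) ; phi(O_K) = integral elements of phi(K) *)
Definition optimal_emb (d : F) (O : A -> Prop) (u : A) : Prop :=
  qmul u u = d *: q1 /\
  forall x, phiK u x -> (O x <-> integral x).

Definition normK (d c : F) : Prop :=
  exists s t : F, (s != 0 \/ t != 0) /\ c = s ^+ 2 - d * t ^+ 2.

Definition in_normalizer (O : A -> Prop) (g : A) : Prop :=
  exists h, qmul g h = q1 /\ qmul h g = q1 /\
    forall y, (exists x, O x /\ y = qmul (qmul g x) h) <-> O y.

Definition in_E (O : A -> Prop) (u g : A) : Prop :=
  exists h, qmul g h = q1 /\ qmul h g = q1 /\
    forall y, phiK u y ->
      ((exists x, O x /\ y = qmul (qmul g x) h) <-> integral y).

End LocalQuat.

(* Let [K = F(u)] with [u^2 = d].  Since 2 is a unit, every element of [A] splits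
   into a part commuting with [u], which lies in [K], and a part anticommuting with [u].
   For an order [X] containing [O_K] whose discriminant has positive valuation both parts
   of each element of [X] stay in [X]: the commuting part is integral over [O_F], and in the
   ramified case the alternative would produce a sublattice of [X] with unit discriminant.
   So [X] is [O_K] plus an [O_K]-lattice in the [K]-line of elements anticommuting with [u].
   As [O_K] is a valuation ring, two such orders are comparable, hence equal when their
   discriminants agree.  For [g] in [E], [g O g^-1] is such an order with the discriminant
   of [O], so [g] normalizes [O]; conversely the normalizer lies in [E]. *)

From Pilot Require Import Defs.
From mathcomp Require Import all_boot all_order all_algebra.
From mathcomp Require Import zify ring.
From Stdlib Require Import Classical.
Set Implicit Arguments. Unset Strict Implicit. Unset Printing Implicit Defensive.
Import Order.TTheory GRing.Theory Num.Theory.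
Local Open Scope ring_scope.

Section QuaternionOrders.
Variable F : fieldType.
Variables a b : F.
Local Notation A := 'rV[F]_4.
Local Notation qmul := (qmul a b).
Local Notation nrd := (nrd a b).
Local Notation q1 := (q1 F).

(** * Quaternion arithmetic *)

Lemma qc_mkq0 (t x y z : F) : qc (mkq t x y z) 0 = t.
Proof. by rewrite /qc mxE inordK. Qed.
Lemma qc_mkq1 (t x y z : F) : qc (mkq t x y z) 1 = x.
Proof. by rewrite /qc mxE inordK. Qed.
Lemma qc_mkq2 (t x y z : F) : qc (mkq t x y z) 2 = y.
Proof. by rewrite /qc mxE inordK. Qed.
Lemma qc_mkq3 (t x y z : F) : qc (mkq t x y z) 3 = z.
Proof. by rewrite /qc mxE inordK. Qed.

Lemma qcD (p q : A) k : qc (p + q) k = qc p k + qc q k.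
Proof. by rewrite /qc mxE. Qed.
Lemma qcN (p : A) k : qc (- p) k = - qc p k.
Proof. by rewrite /qc mxE. Qed.
Lemma qcZ (c : F) (p : A) k : qc (c *: p) k = c * qc p k.
Proof. by rewrite /qc mxE. Qed.
Lemma qc0 k : qc (0 : A) k = 0.
Proof. by rewrite /qc mxE. Qed.
Lemma qc_sum I (r : seq I) (P : pred I) (f : I -> A) k :
  qc (\sum_(i <- r | P i) f i) k = \sum_(i <- r | P i) qc (f i) k.
Proof. by rewrite /qc summxE. Qed.

Lemma qc1_0 : qc q1 0 = 1.
Proof. exact: qc_mkq0. Qed.

Definition qcE := (qc_mkq0, qc_mkq1, qc_mkq2, qc_mkq3, qcD, qcN, qcZ, qc0).

Lemma qext (p q : A) : qc p 0 = qc q 0 -> qc p 1 = qc q 1 -> qc p 2 = qc q 2 ->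
  qc p 3 = qc q 3 -> p = q.
Proof.
move=> h0 h1 h2 h3; apply/rowP => i; rewrite -[i]inord_val.
by case: i => [[|[|[|[|k]]]] hk].
Qed.

Local Ltac qring := apply: qext; rewrite /Defs.qmul /Defs.q1 ?qcE; ring.

Lemma qmulA (p q r : A) : qmul p (qmul q r) = qmul (qmul p q) r.
Proof. qring. Qed.
Lemma qmulDl (p q r : A) : qmul (p + q) r = qmul p r + qmul q r.
Proof. qring. Qed.
Lemma qmulDr (p q r : A) : qmul r (p + q) = qmul r p + qmul r q.
Proof. qring. Qed.
Lemma qmulZl (c : F) (p q : A) : qmul (c *: p) q = c *: qmul p q.
Proof. qring. Qed.
Lemma qmulZr (c : F) (p q : A) : qmul p (c *: q) = c *: qmul p q.
Proof. qring. Qed.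
Lemma qmul1l (p : A) : qmul q1 p = p.
Proof. qring. Qed.
Lemma qmul1r (p : A) : qmul p q1 = p.
Proof. qring. Qed.
Lemma qmulNl (p q : A) : qmul (- p) q = - qmul p q.
Proof. qring. Qed.
Lemma qmulNr (p q : A) : qmul p (- q) = - qmul p q.
Proof. qring. Qed.
Lemma qmulBl (p q r : A) : qmul (p - q) r = qmul p r - qmul q r.
Proof. qring. Qed.
Lemma qmulBr (p q r : A) : qmul r (p - q) = qmul r p - qmul r q.
Proof. qring. Qed.
Lemma qmul0l (p : A) : qmul 0 p = 0.
Proof. qring. Qed.
Lemma qmul0r (p : A) : qmul p 0 = 0.
Proof. qring. Qed.

Lemma qmul_suml I (r : seq I) (P : pred I) (g : I -> A) (q : A) :
  qmul (\sum_(i <- r | P i) g i) q = \sum_(i <- r | P i) qmul (g i) q.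
Proof. exact: (big_morph (qmul^~ q) (fun p p' => qmulDl p p' q) (qmul0l q)). Qed.

Lemma qmul_sumr I (r : seq I) (P : pred I) (g : I -> A) (q : A) :
  qmul q (\sum_(i <- r | P i) g i) = \sum_(i <- r | P i) qmul q (g i).
Proof. exact: (big_morph (qmul q) (fun p p' => qmulDr p p' q) (qmul0r q)). Qed.

Lemma nrdM (p q : A) : nrd (qmul p q) = nrd p * nrd q.
Proof. rewrite /Defs.nrd /Defs.qmul !qcE; ring. Qed.

Lemma nrd1 : nrd q1 = 1.
Proof. rewrite /Defs.nrd /Defs.q1 !qcE; ring. Qed.

Lemma trdC (p q : A) : trd (qmul p q) = trd (qmul q p).
Proof. rewrite /trd /Defs.qmul !qcE; ring. Qed.
Lemma trdD (p q : A) : trd (p + q) = trd p + trd q.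
Proof. by rewrite /trd qcD mulrDr. Qed.
Lemma trdZ (c : F) (p : A) : trd (c *: p) = c * trd p.
Proof. by rewrite /trd qcZ mulrCA. Qed.
Lemma trd0 : trd (0 : A) = 0.
Proof. by rewrite /trd qc0 mulr0. Qed.
Lemma trd1 : trd q1 = 2.
Proof. by rewrite /trd /Defs.q1 qc_mkq0 mulr1. Qed.

Lemma trd_sum I (r : seq I) (P : pred I) (g : I -> A) :
  trd (\sum_(i <- r | P i) g i) = \sum_(i <- r | P i) trd (g i).
Proof. exact: (big_morph (@trd F) (@trdD) trd0). Qed.

Lemma nrd_qpow (p : A) k : nrd (qpow a b p k) = nrd p ^+ k.
Proof. by elim: k => [|k IH] /=; rewrite ?nrd1 // nrdM IH exprS. Qed.

Lemma pure_sq (p : A) : qc p 0 = 0 -> qmul p p = (- nrd p) *: q1.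
Proof. by move=> h; apply: qext; rewrite /Defs.nrd /Defs.qmul /Defs.q1 ?qcE h; ring. Qed.

Lemma pure_mulC_add (p q : A) : qc p 0 = 0 -> qc q 0 = 0 ->
  qmul p q + qmul q p = trd (qmul p q) *: q1.
Proof. by move=> hp hq; apply: qext; rewrite /trd /Defs.qmul /Defs.q1 ?qcE hp hq; ring. Qed.

Lemma trd_form_nondeg (z : A) : (2 : F) != 0 -> a != 0 -> b != 0 ->
  (forall x, trd (qmul x z) = 0) -> z = 0.
Proof.
move=> n2 na nb h.
have := h (mkq 1 0 0 0); have := h (mkq 0 1 0 0).
have := h (mkq 0 0 1 0); have := h (mkq 0 0 0 1).
rewrite /trd /Defs.qmul !qcE => h3 h2 h1 h0.
apply: qext; rewrite qc0.
- by apply: (mulfI n2); rewrite mulr0 -h0; ring.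
- by apply: (mulfI (mulf_neq0 n2 na)); rewrite mulr0 -h1; ring.
- by apply: (mulfI (mulf_neq0 n2 nb)); rewrite mulr0 -h2; ring.
- by apply: (mulfI (mulf_neq0 (mulf_neq0 n2 na) nb)); rewrite mulr0 -oppr0 -h3; ring.
Qed.

(** * Valuations *)

Variable v : F -> int.
Hypothesis Hdv : discrete_valuation v.

(* [x] lies in [pi^N O_F]; the disjunct [x == 0] is needed as [v 0] is arbitrary. *)
Definition vge (N : int) (x : F) : bool := (x == 0) || (N <= v x).

Lemma vM x y : x != 0 -> y != 0 -> v (x * y) = v x + v y.
Proof. by case: Hdv => H _; apply: H. Qed.

Lemma v1 : v 1 = 0.
Proof.
have h : v 1 = v 1 + v 1 by rewrite -vM ?oner_neq0 ?mulr1.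
lia.
Qed.

Lemma vN x : v (- x) = v x.
Proof.
have vN1 : v (-1) = 0.
  have h : v 1 = v (-1) + v (-1) by rewrite -vM ?oppr_eq0 ?oner_neq0 ?mulrNN ?mulr1.
  by move: h; rewrite v1; lia.
have [->|nx] := eqVneq x 0; first by rewrite oppr0.
by rewrite -mulN1r vM ?oppr_eq0 ?oner_eq0 // vN1 add0r.
Qed.

Lemma vV x : x != 0 -> v x^-1 = - v x.
Proof. by move=> nx; have := vM nx (invr_neq0 nx); rewrite mulfV // v1; lia. Qed.

Lemma vX x n : x != 0 -> v (x ^+ n) = v x *+ n.
Proof.
move=> nx; elim: n => [|n IH]; first by rewrite expr0 v1 mulr0n.
by rewrite exprS vM ?expf_neq0 // IH mulrS.
Qed.

Lemma vgeE N x : x != 0 -> vge N x = (N <= v x).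
Proof. by rewrite /vge => /negbTE ->. Qed.

Lemma vge0 N : vge N 0.
Proof. by rewrite /vge eqxx. Qed.

Lemma vge_v x : vge (v x) x.
Proof. by rewrite /vge lexx orbT. Qed.

Lemma vge1 : vge 0 1.
Proof. by rewrite vgeE ?oner_eq0 // v1. Qed.

Lemma vge_le N M x : M <= N -> vge N x -> vge M x.
Proof. by rewrite /vge => le /orP [->//|h]; apply/orP; right; lia. Qed.

Lemma vgeN N x : vge N (- x) = vge N x.
Proof. by rewrite /vge vN oppr_eq0. Qed.

Lemma vgeD N x y : vge N x -> vge N y -> vge N (x + y).
Proof.
have [->|nx] := eqVneq x 0; first by rewrite add0r.
have [->|ny] := eqVneq y 0; first by rewrite addr0.
have [->|nxy] := eqVneq (x + y) 0; first by rewrite vge0.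
case: Hdv => _ [ultra _]; have hmin := ultra _ _ nx ny nxy.
by rewrite !vgeE // => hx hy; apply: le_trans hmin; rewrite le_min hx hy.
Qed.

Lemma vgeB N x y : vge N x -> vge N y -> vge N (x - y).
Proof. by move=> hx hy; apply: vgeD; rewrite ?vgeN. Qed.

Lemma vgeM N M x y : vge N x -> vge M y -> vge (N + M) (x * y).
Proof.
have [->|nx] := eqVneq x 0; first by rewrite mul0r => _ _; exact: vge0.
have [->|ny] := eqVneq y 0; first by rewrite mulr0 => _ _; exact: vge0.
by rewrite !vgeE ?mulf_neq0 // vM // => hx hy; lia.
Qed.

Lemma vgeM0 x y : vge 0 x -> vge 0 y -> vge 0 (x * y).
Proof. by move=> hx hy; have := vgeM hx hy; rewrite addr0. Qed.

Lemma vgeX N x n : vge N x -> vge (N *+ n) (x ^+ n).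
Proof.
move=> h; elim: n => [|n IH]; first by rewrite expr0 mulr0n vge1.
by rewrite exprS mulrS; apply: vgeM.
Qed.

Lemma vgeX0 x n : vge 0 x -> vge 0 (x ^+ n).
Proof. by move=> hx; have := vgeX n hx; rewrite mul0rn. Qed.

Lemma vgeN1 : vge 0 (-1).
Proof. by rewrite vgeN vge1. Qed.

Lemma vge_nat n : vge 0 n%:R.
Proof. by elim: n => [|n IH]; rewrite ?vge0 // -addn1 natrD vgeD ?vge1. Qed.

Lemma vge_sum I (r : seq I) (P : pred I) (f : I -> F) :
  (forall i, P i -> vge 0 (f i)) -> vge 0 (\sum_(i <- r | P i) f i).
Proof. by move=> hf; apply: (big_ind (vge 0)) => //; [exact: vge0 | exact: vgeD]. Qed.

Lemma vge_prod I (r : seq I) (P : pred I) (f : I -> F) :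
  (forall i, P i -> vge 0 (f i)) -> vge 0 (\prod_(i <- r | P i) f i).
Proof. by move=> hf; apply: (big_ind (vge 0)) => //; [exact: vge1 | exact: vgeM0]. Qed.

Lemma vgeV0 x : x != 0 -> v x = 0 -> vge 0 x^-1.
Proof. by move=> nx vx; rewrite vgeE ?invr_eq0 // vV // vx. Qed.

Lemma vge_eq0 x : (forall N, vge N x) -> x = 0.
Proof. by move=> h; apply/eqP; have := h (v x + 1); rewrite /vge => /orP [//|]; lia. Qed.

Lemma OF_vge x : OF v x <-> vge 0 x.
Proof.
rewrite /OF /vge; split; first by case=> [->|h]; rewrite ?eqxx // h orbT.
by case/orP => [/eqP ->|h]; [left|right].
Qed.

Lemma vclose_vge N x y : vclose v N x y <-> vge N (x - y).
Proof.
rewrite /vclose /vge subr_eq0; split; first by case=> [->|->]; rewrite ?eqxx ?orbT.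
by case/orP => [/eqP|]; [left|right].
Qed.

Lemma vD_strict x y : x != 0 -> vge (v x + 1) y -> x + y != 0 /\ v (x + y) = v x.
Proof.
move=> nx hy.
have nxy : x + y != 0.
  apply: contraTneq hy => /eqP; rewrite addrC addr_eq0 => /eqP ->; rewrite vgeN vgeE //; lia.
have ge : v x <= v (x + y).
  by rewrite -vgeE //; apply: vgeD; [exact: vge_v | apply: vge_le hy; lia].
split=> //; apply/eqP; rewrite eq_le ge andbT leNgt; apply/negP => lt.
have lt1 : v x + 1 <= v (x + y) by lia.
have := vgeB (vge_le lt1 (vge_v (x + y))) hy; rewrite addrK vgeE //; lia.
Qed.

(** * Lattices and discriminants *)

Definition Gram (f : 'I_4 -> A) : 'M[F]_4 := \matrix_(i, j) trd (qmul (f i) (f j)).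

Lemma Gram_lin (f e : 'I_4 -> A) (P : 'M[F]_4) :
  (forall i, f i = \sum_j P i j *: e j) -> Gram f = P *m Gram e *m P^T.
Proof.
move=> hf; apply/matrixP => i k; rewrite !mxE hf hf qmul_suml trd_sum.
under eq_bigr => j _ do rewrite qmul_sumr trd_sum.
rewrite exchange_big /=; apply: eq_bigr => l _.
rewrite !mxE mulr_suml; apply: eq_bigr => j _.
by rewrite !mxE qmulZl qmulZr !trdZ; ring.
Qed.

Lemma vge_det n (P : 'M[F]_n) : (forall i j, vge 0 (P i j)) -> vge 0 (\det P).
Proof.
move=> hP; apply: vge_sum => s _; apply: vgeM0; first exact/vgeX0/vgeN1.
by apply: vge_prod => j _; apply: hP.
Qed.

Lemma vge_adj n (P : 'M[F]_n.+1) : (forall i j, vge 0 (P i j)) -> forall i j, vge 0 (\adj P i j).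
Proof.
move=> hP i j; rewrite mxE /cofactor; apply: vgeM0; first exact/vgeX0/vgeN1.
by apply: vge_det => k l; rewrite !mxE.
Qed.

Lemma sum_delta (g : 'I_4 -> A) i : \sum_j (i == j)%:R *: g j = g i.
Proof.
rewrite (bigD1 i) //= eqxx scale1r big1 ?addr0 // => j.
by rewrite eq_sym => /negbTE ->; rewrite scale0r.
Qed.

Section Lattice.
Variable X : A -> Prop.
Variable e : 'I_4 -> A.
Hypothesis hb : is_Obasis v X e.

Lemma latticeP x :
  X x <-> exists c : 'I_4 -> F, (forall i, vge 0 (c i)) /\ x = \sum_i c i *: e i.
Proof.
case: hb => _ ->; split; case=> c [hc ->]; exists c; split=> // i; exact/OF_vge.
Qed.

Lemma lattice_basis i : X (e i).
Proof.
apply/latticeP; exists (fun j => (i == j)%:R); split; last by rewrite sum_delta.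
by move=> j; case: (i == j); [apply: vge1 | apply: vge0].
Qed.

Lemma latticeD x y : X x -> X y -> X (x + y).
Proof.
move=> /latticeP [c [hc ->]] /latticeP [c' [hc' ->]]; apply/latticeP.
exists (fun i => c i + c' i); split; first by move=> i; apply: vgeD.
by rewrite -big_split /=; apply: eq_bigr => i _; rewrite scalerDl.
Qed.

Lemma latticeZ k x : vge 0 k -> X x -> X (k *: x).
Proof.
move=> hk /latticeP [c [hc ->]]; apply/latticeP.
exists (fun i => k * c i); split; first by move=> i; apply: vgeM0.
by rewrite scaler_sumr; apply: eq_bigr => i _; rewrite scalerA.
Qed.

Lemma latticeN x : X x -> X (- x).
Proof. by move=> hx; rewrite -scaleN1r; apply: latticeZ => //; apply: vgeN1. Qed.

Lemma latticeB x y : X x -> X y -> X (x - y).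
Proof. by move=> hx hy; apply: latticeD => //; apply: latticeN. Qed.

Lemma lattice0 : X 0.
Proof. by rewrite -(scale0r (e ord0)); apply: latticeZ; [apply: vge0 | apply: lattice_basis]. Qed.

Lemma lattice_qc_bounded : exists M, forall x, X x -> forall k, (k < 4)%N -> vge M (qc x k).
Proof.
pose S := (\sum_i \sum_(k < 4) `|v (qc (e i) k)|)%N.
exists (- S%:Z) => x /latticeP [c [hc ->]] k hk.
rewrite qc_sum; apply: (big_ind (vge (- S%:Z))); first exact: vge0.
  by move=> y z; apply: vgeD.
move=> i _; rewrite qcZ.
have hle : (`|v (qc (e i) k)| <= S)%N.
  by rewrite /S (bigD1 i) //= (bigD1 (Ordinal hk)) //= -addnA leq_addr.
have := vgeM (hc i) (vge_v (qc (e i) k)); rewrite add0r; apply: vge_le; lia.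
Qed.

Lemma lattice_nrd_bounded : exists C, forall x, X x -> vge C (nrd x).
Proof.
have [M hM] := lattice_qc_bounded.
exists (M + M - `|v a|%:Z - `|v b|%:Z) => x hx.
have h0 := hM x hx 0%N erefl; have h1 := hM x hx 1%N erefl.
have h2 := hM x hx 2%N erefl; have h3 := hM x hx 3%N erefl.
have va := vge_v a; have vb := vge_v b.
rewrite /Defs.nrd; apply: vgeD; [apply: vgeB; [apply: vgeB|]|].
- by apply: vge_le (vgeX 2 h0); lia.
- by rewrite expr2 mulrA; apply: vge_le (vgeM (vgeM va h1) h1); lia.
- by rewrite expr2 mulrA; apply: vge_le (vgeM (vgeM vb h2) h2); lia.
- by rewrite expr2 mulrA; apply: vge_le (vgeM (vgeM (vgeM va vb) h3) h3); lia.
Qed.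

Lemma lattice_coord_mx (f : 'I_4 -> A) : (forall i, X (f i)) ->
  exists P : 'M[F]_4, (forall i j, vge 0 (P i j)) /\ forall i, f i = \sum_j P i j *: e j.
Proof.
move=> hf; have /fin_all_exists [c hc] : forall i, exists c : 'I_4 -> F,
    (forall j, vge 0 (c j)) /\ f i = \sum_j c j *: e j by move=> i; apply/latticeP.
exists (\matrix_(i, j) c i j); split; first by move=> i j; rewrite mxE; case: (hc i).
by move=> i; case: (hc i) => _ ->; apply: eq_bigr => j _; rewrite mxE.
Qed.

Lemma vge_det_Gram (f : 'I_4 -> A) : (forall i, X (f i)) ->
  vge (v (\det (Gram e))) (\det (Gram f)).
Proof.
case/lattice_coord_mx => P [hP hf]; rewrite (Gram_lin hf) !det_mulmx det_tr mulrC mulrA.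
by have := vgeM (vgeM0 (vge_det hP) (vge_det hP)) (vge_v (\det (Gram e))); rewrite add0r.
Qed.

End Lattice.

Lemma sublattice_eq (X Y : A -> Prop) (e e' : 'I_4 -> A) :
  is_Obasis v X e -> is_Obasis v Y e' -> (forall x, X x -> Y x) ->
  \det (Gram e) != 0 -> v (\det (Gram e)) = v (\det (Gram e')) -> forall y, Y y -> X y.
Proof.
move=> hX hY hXY n1 ev.
have [P [hP hf]] := lattice_coord_mx hY (fun i => hXY _ (lattice_basis hX i)).
have eG := Gram_lin hf.
have nP : \det P != 0 by apply: contraNneq n1; rewrite eG !det_mulmx => ->; rewrite !mul0r.
have n2 : \det (Gram e') != 0.
  by apply: contraNneq n1; rewrite eG !det_mulmx => ->; rewrite mulr0 mul0r.
have vP : v (\det P) = 0.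
  move: ev; rewrite eG !det_mulmx det_tr vM ?mulf_neq0 // vM //.
  by set p := v (\det P); set g := v (\det (Gram e')); lia.
pose Q := (\det P)^-1 *: \adj P.
have hQP : Q *m P = 1%:M by rewrite /Q -scalemxAl mul_adj_mx scale_scalar_mx mulVf.
have hQ i j : vge 0 (Q i j) by rewrite mxE; apply: vgeM0; [exact: vgeV0 | exact: vge_adj].
have he' j : e' j = \sum_i Q j i *: e i.
  under eq_bigr => i _ do rewrite hf scaler_sumr.
  rewrite exchange_big /= -(sum_delta e' j); apply: eq_bigr => k _.
  have -> : (j == k)%:R = (Q *m P) j k by rewrite hQP mxE.
  by rewrite mxE scaler_suml; apply: eq_bigr => i _; rewrite scalerA.
move=> y /(latticeP hY) [c [hc ->]]; apply/(latticeP hX).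
exists (fun i => \sum_j c j * Q j i); split; first by move=> i; apply: vge_sum => j _; apply: vgeM0.
under eq_bigr => j _ do rewrite he' scaler_sumr.
rewrite exchange_big /=; apply: eq_bigr => i _; rewrite scaler_suml; apply: eq_bigr => j _.
by rewrite scalerA.
Qed.

Section Conjugation.
Variables (g h : A).
Hypothesis hhg : qmul h g = q1.

Local Notation cj x := (qmul (qmul g x) h).

Lemma conj_mul x y : qmul (cj x) (cj y) = cj (qmul x y).
Proof. by rewrite !qmulA -[qmul (qmul (qmul g x) h) g]qmulA hhg qmul1r -!qmulA. Qed.

Lemma trd_conj x : trd (cj x) = trd x.
Proof. by rewrite trdC qmulA hhg qmul1l. Qed.

Lemma Gram_conj (e : 'I_4 -> A) : Gram (fun i => cj (e i)) = Gram e.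
Proof. by apply/matrixP => i j; rewrite !mxE conj_mul trd_conj. Qed.

Lemma conj_Obasis (X : A -> Prop) (e : 'I_4 -> A) : is_Obasis v X e ->
  is_Obasis v (fun y => exists x, X x /\ y = cj x) (fun i => cj (e i)).
Proof.
have cj_sum (c : 'I_4 -> F) : cj (\sum_i c i *: e i) = \sum_i c i *: cj (e i).
  by rewrite qmul_sumr qmul_suml; apply: eq_bigr => i _; rewrite qmulZr qmulZl.
case=> hind hrep; split=> [c hc | y].
  have cjK x : qmul (qmul h (cj x)) g = x by rewrite !qmulA hhg qmul1l -qmulA hhg qmul1r.
  by apply: hind; rewrite -[LHS]cjK cj_sum hc qmul0r qmul0l.
split=> [[x [/hrep [c [hc ->]] ->]] | [c [hc ->]]]; first by exists c; rewrite cj_sum.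
by exists (\sum_i c i *: e i); split; [apply/hrep; exists c | rewrite cj_sum].
Qed.

End Conjugation.

(** * Hensel's lemma and the quadratic extension *)

Lemma v_surj (n : int) : exists2 t, t != 0 & v t = n.
Proof.
case: Hdv => _ [_ [pi [npi vpi]]].
case: n => m.
  by exists (pi ^+ m); rewrite ?expf_neq0 // vX // vpi natz.
exists (pi^-1 ^+ m.+1); first by rewrite expf_neq0 ?invr_eq0.
by rewrite vX ?invr_eq0 // vV // vpi NegzE mulNrn natz.
Qed.

Lemma exists_vsq_scale c : c != 0 ->
  exists2 t, t != 0 & v (t ^+ 2 * c) = 0 \/ v (t ^+ 2 * c) = 1.
Proof.
move=> nc; have [t nt vt] := v_surj (- (v c %/ 2)%Z).
exists t => //; rewrite vM ?expf_neq0 // vX // vt; lia.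
Qed.

Section LocalField.
Hypothesis Hnd : nondyadic v.
Hypothesis Hcomp : vcomplete v.

Lemma two_neq0 : (2 : F) != 0.
Proof. by apply/negP => /eqP h; apply: Hnd; left. Qed.

Lemma v2 : v 2 = 0.
Proof.
have := vge_nat 2; rewrite vgeE ?two_neq0 // => h.
by apply/eqP; rewrite eq_le h andbT leNgt; apply/negP => h2; apply: Hnd; right.
Qed.

Lemma v2X n : v (2 ^+ n) = 0.
Proof. by rewrite vX ?two_neq0 // v2 mul0rn. Qed.

Lemma vge0_sq s : vge (-1) (s ^+ 2) -> vge 0 s.
Proof.
have [->|ns] := eqVneq s 0; first by rewrite vge0.
by rewrite !vgeE ?expf_neq0 // vX //; lia.
Qed.

Lemma v_unit1 x : vge 1 (x - 1) -> x != 0 /\ v x = 0.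
Proof.
move=> h; have := @vD_strict 1 (x - 1) (oner_neq0 F); rewrite v1 add0r.
by rewrite subrKC => /(_ h).
Qed.

Section Hensel.
Variable w : F.
Hypothesis hw : vge 1 (w - 1).

Definition newton (y : F) : F := (y + w / y) / 2.

Lemma newton_step y (N : int) : vge 1 (y - 1) -> vge N (y ^+ 2 - w) ->
  vge N (newton y - y) /\ vge (N + N) (newton y ^+ 2 - w).
Proof.
move=> hy hN; have [ny vy] := v_unit1 hy.
have n2y : 2 * y != 0 by rewrite mulf_neq0 ?two_neq0.
have h2y : vge 0 (2 * y)^-1 by apply: vgeV0; rewrite // vM ?two_neq0 // v2 vy.
have -> : newton y - y = - (y ^+ 2 - w) * (2 * y)^-1.
  by rewrite /newton; field; rewrite two_neq0 ny.
have -> : newton y ^+ 2 - w = ((y ^+ 2 - w) * (2 * y)^-1) ^+ 2.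
  by rewrite /newton; field; rewrite two_neq0 ny.
split; first by rewrite mulNr vgeN; have := vgeM hN h2y; rewrite addr0.
by rewrite expr2; have := vgeM hN h2y; rewrite addr0 => h; have := vgeM h h.
Qed.

Fixpoint hensel_seq (k : nat) : F := if k is k'.+1 then newton (hensel_seq k') else 1.

Lemma hensel_seq_approx k :
  vge 1 (hensel_seq k - 1) /\ vge (Posz k + 1) (hensel_seq k ^+ 2 - w).
Proof.
elim: k => [|k [h1 h2]] /=; first by rewrite subrr vge0 expr1n -opprB vgeN.
have [hd hsq] := newton_step h1 h2.
split; last by apply: vge_le hsq; lia.
have -> : newton (hensel_seq k) - 1 = (hensel_seq k - 1) + (newton (hensel_seq k) - hensel_seq k).
  by rewrite [RHS]addrC subrKA.
by apply: vgeD => //; apply: vge_le hd; lia.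
Qed.

Lemma hensel_seq_cauchy n m : (n <= m)%N -> vge (Posz n + 1) (hensel_seq m - hensel_seq n).
Proof.
elim: m => [|m IH]; first by rewrite leqn0 => /eqP ->; rewrite subrr vge0.
rewrite leq_eqVlt => /orP [/eqP ->|]; first by rewrite subrr vge0.
rewrite ltnS => hnm; rewrite -(subrKA (hensel_seq m)); apply: vgeD; last exact: IH.
have [h1 h2] := hensel_seq_approx m; have [hd _] := newton_step h1 h2.
by apply: vge_le hd; lia.
Qed.

Lemma square_of_unit1 : exists r, r ^+ 2 = w.
Proof.
have [l hl] : exists l, forall N : int,
    exists M, forall n, (M <= n)%N -> vclose v N (hensel_seq n) l.
  apply: Hcomp => N; exists `|N|%N => m n hm hn; apply/vclose_vge.
  case: (leqP m n) => hmn.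
    by rewrite -vgeN opprB; apply: vge_le (hensel_seq_cauchy hmn); lia.
  by apply: vge_le (hensel_seq_cauchy (ltnW hmn)); lia.
exists l; apply/eqP; rewrite -subr_eq0; apply/eqP; apply: vge_eq0 => N.
have [M hM] := hl `|N|%:Z; pose n := maxn M `|N|%N.
have /vclose_vge hn := hM n (leq_maxl _ _).
have [h1 h3] := hensel_seq_approx n; have [_ vx] := v_unit1 h1.
have hx0 : vge 0 (hensel_seq n) by rewrite /vge vx lexx orbT.
have -> : l ^+ 2 - w = (hensel_seq n ^+ 2 - w)
    - (hensel_seq n - l) * (2 * hensel_seq n - (hensel_seq n - l)) by ring.
apply: (@vge_le `|N|%:Z); first lia.
apply: vgeB; first by apply: vge_le h3; have := leq_maxr M `|N|%N; lia.
have := vgeM hn (vgeB (vgeM0 (vge_nat 2) hx0) (vge_le (_ : 0 <= `|N|%:Z) hn)).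
by rewrite addr0; apply.
Qed.

End Hensel.

Section NormForm.
Variable d : F.
Hypothesis nsq : forall t : F, t ^+ 2 != d.

Definition knorm (s r : F) : F := s ^+ 2 - d * r ^+ 2.

Lemma nonsquare_neq0 : d != 0.
Proof. by apply: contraNneq (nsq 0) => ->; rewrite expr0n. Qed.

(* [s + r sqrt d] is integral over [O_F]: its trace [2 s] and its norm lie in [O_F]. *)
Definition intK (s r : F) : bool := vge 0 s && vge 0 (knorm s r).

Lemma knorm_neq0 (s r : F) : (s != 0) || (r != 0) -> knorm s r != 0.
Proof.
have [->|nr] := eqVneq r 0.
  by rewrite orbF /knorm expr0n /= mulr0 subr0 => h; rewrite expf_neq0.
move=> _; rewrite /knorm subr_eq0; apply: contraNneq (nsq (s / r)) => e.
by rewrite expr_div_n e mulfK ?expf_neq0.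
Qed.

Lemma knormV s r : knorm s r != 0 -> knorm (s / knorm s r) (- r / knorm s r) = (knorm s r)^-1.
Proof. by rewrite /knorm => nN; field. Qed.

(* The integral closure of [O_F] in [F(sqrt d)] is a valuation ring. *)
Lemma intK_or_inv (s r : F) : (s != 0) || (r != 0) ->
  intK s r || intK (s / knorm s r) (- r / knorm s r).
Proof.
move=> hsr; have nN := knorm_neq0 hsr; set N := knorm s r in nN *.
rewrite /intK knormV // -/N.
have [-> | ns] := eqVneq s 0.
  by rewrite mul0r vge0 /= !vgeE ?invr_eq0 // vV //; lia.
rewrite !vgeE ?mulf_neq0 ?invr_eq0 // vM ?invr_eq0 // vV //.
case: (ltP (v s + v s) (v N)) => hb; last by lia.
have [rho hrho] : exists rho, rho ^+ 2 = d * r ^+ 2 / s ^+ 2.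
  apply: square_of_unit1.
  have -> : d * r ^+ 2 / s ^+ 2 - 1 = - (N / s ^+ 2) by rewrite /N /knorm; field.
  rewrite vgeN vgeE ?mulf_neq0 ?invr_eq0 ?expf_neq0 // vM ?invr_eq0 ?expf_neq0 //.
  by rewrite vV ?expf_neq0 // vX //; lia.
have nr : r != 0.
  apply: contraTneq hb => r0; move: nN; rewrite /N /knorm r0 expr0n /= mulr0 subr0.
  by move=> n2; rewrite vX //; lia.
have := nsq (rho * s / r).
by rewrite !expr_div_n exprMn hrho divfK ?expf_neq0 // mulfK ?expf_neq0 // eqxx.
Qed.

(* The two values of [v (t^2 d)] are the unramified and the ramified case. *)
Lemma intK_or_ramified t s r : t != 0 ->
  v (t ^+ 2 * d) = 0 \/ v (t ^+ 2 * d) = 1 ->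
  vge 0 (2 * t * (d * r)) -> vge 0 (- (4 * (t ^+ 2 * d)) * knorm s r) ->
  intK s r \/ [/\ v (t ^+ 2 * d) = 1, d * r ^+ 2 != 0, v (d * r ^+ 2) = -1 & vge 0 s].
Proof.
move=> nt ht hsg hN; set dl := t ^+ 2 * d in ht hN *.
have ndl : dl != 0 by rewrite mulf_neq0 ?expf_neq0 ?nonsquare_neq0.
have e4 : (4 : F) = 2 ^+ 2 by ring.
have n4dl : 4 * dl != 0 by rewrite mulf_neq0 // e4 expf_neq0 ?two_neq0.
have v4dl : v (4 * dl) = v dl by rewrite e4 vM ?expf_neq0 ?two_neq0 // v2X add0r.
set sg := 2 * t * (d * r) in hsg; set D := d * r ^+ 2.
have eD : D = sg ^+ 2 / (4 * dl).
  by rewrite /D /sg /dl; clearbody D sg dl; field; rewrite nt nonsquare_neq0 e4 expf_neq0 ?two_neq0.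
have hNv : vge (- v dl) (knorm s r).
  have [-> | nN] := eqVneq (knorm s r) 0; first exact: vge0.
  by move: hN; rewrite !vgeE ?mulf_neq0 ?oppr_eq0 // vM ?oppr_eq0 // vN v4dl; lia.
have hD k : vge k sg -> vge (k + k - v dl) D.
  move=> hk; rewrite eD; have := vgeM (vgeX 2 hk) (vge_v (4 * dl)^-1).
  by rewrite vV // v4dl; apply: vge_le; lia.
have hs : vge (-1) (knorm s r) -> vge (-1) D -> vge 0 s.
  by move=> h1 h2; apply: vge0_sq; rewrite -(subrK D (s ^+ 2)); apply: vgeD.
rewrite /intK; case: ht => hdl.
  have hN0 : vge 0 (knorm s r) by move: hNv; rewrite hdl oppr0.
  have hD0 : vge 0 D by have := hD 0 hsg; rewrite hdl.
  by left; rewrite hN0 hs ?(vge_le _ hN0) ?(vge_le _ hD0).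
have hN1 : vge (-1) (knorm s r) by move: hNv; rewrite hdl.
case: (boolP (vge 1 sg)) => hsg1.
  have hD1 : vge 1 D by have := hD 1 hsg1; rewrite hdl.
  have hs0 : vge 0 s by apply: (hs hN1 (vge_le _ hD1)).
  by left; rewrite hs0 /=; apply: vgeB; [exact: vgeX0 | exact: vge_le _ hD1].
have nsg : sg != 0 by apply: contraNneq hsg1 => ->; rewrite vge0.
have vsg : v sg = 0 by move: hsg hsg1; rewrite !vgeE //; lia.
have nD : D != 0 by rewrite eD mulf_neq0 ?expf_neq0 ?invr_eq0.
have vD : v D = -1 by rewrite eD vM ?expf_neq0 ?invr_eq0 // vX // vV // v4dl hdl vsg.
by right; split=> //; apply: (hs hN1); rewrite vgeE // vD.
Qed.

End NormForm.

(** * The subalgebra [F(u)] and its anticommutant *)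

Section QuadraticSubalgebra.
Hypotheses (a0 : a != 0) (b0 : b != 0).
Variables (d : F) (u : A).
Hypothesis hu : qmul u u = d *: q1.
Hypothesis nsq : forall t : F, t ^+ 2 != d.

Local Notation knorm := (knorm d).
Local Notation intK := (intK d).
Local Notation d_neq0 := (nonsquare_neq0 nsq).

Local Ltac qlin := apply: qext; rewrite ?qcE; ring.

Definition kelt (s r : F) : A := s *: q1 + r *: u.

(* The components of [x] commuting and anticommuting with [u]. *)
Definition cpart (x : A) : A := 2^-1 *: (x + d^-1 *: qmul u (qmul x u)).
Definition apart (x : A) : A := x - cpart x.

Definition ucomm (z : A) : Prop := qmul z u = qmul u z.
Definition uanti (z : A) : Prop := qmul z u = - qmul u z.

Lemma u_neq0 : u != 0.
Proof.
apply: contraNneq d_neq0 => u0; have := congr1 (fun p : A => qc p 0) hu.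
by rewrite u0 qmul0l qcZ qc1_0 qc0 mulr1 => <-.
Qed.

Lemma u_pure : qc u 0 = 0.
Proof.
have hc k : qc (qmul u u) k = qc (d *: q1) k by rewrite hu.
have := hc 0; have := hc 1; have := hc 2; have := hc 3.
rewrite /Defs.qmul /Defs.q1 !qcE !mulr0 !mulr1 => h3 h2 h1 h0.
apply: contraNeq (nsq (qc u 0)) => nu; apply/eqP.
have n2u : 2 * qc u 0 != 0 by rewrite mulf_neq0 ?two_neq0.
have e1 : qc u 1 = 0 by apply: (mulfI n2u); rewrite mulr0 -h1; ring.
have e2 : qc u 2 = 0 by apply: (mulfI n2u); rewrite mulr0 -h2; ring.
have e3 : qc u 3 = 0 by apply: (mulfI n2u); rewrite mulr0 -h3; ring.
by rewrite -h0 e1 e2 e3; ring.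
Qed.

Lemma nrd_u : nrd u = - d.
Proof.
have := congr1 (fun p : A => qc p 0) (pure_sq u_pure); rewrite hu !qcZ qc1_0 !mulr1 => ->.
by rewrite opprK.
Qed.

Lemma kelt_mul s r s' r' :
  qmul (kelt s r) (kelt s' r') = kelt (s * s' + d * r * r') (s * r' + r * s').
Proof. by rewrite /kelt !qmulDl !qmulDr !qmulZl !qmulZr !qmul1l qmul1r hu; qlin. Qed.

Lemma kelt_ucomm s r : ucomm (kelt s r).
Proof. by rewrite /ucomm /kelt qmulDl qmulDr !qmulZl !qmulZr qmul1l qmul1r. Qed.

Lemma kelt00 : kelt 0 0 = 0.
Proof. by rewrite /kelt !scale0r addr0. Qed.

Lemma kelt10 : kelt 1 0 = q1.
Proof. by rewrite /kelt scale0r addr0 scale1r. Qed.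

Lemma nrd_kelt s r : nrd (kelt s r) = knorm s r.
Proof.
have hd : d = - nrd u by rewrite nrd_u opprK.
by rewrite /knorm hd /kelt /Defs.nrd /Defs.q1 !qcE u_pure; ring.
Qed.

Lemma trd_kelt s r : trd (kelt s r) = 2 * s.
Proof. by rewrite /trd /kelt !qcE u_pure mulr0 mulr1 addr0. Qed.

Lemma kelt_inv s r : knorm s r != 0 ->
  qmul (kelt (s / knorm s r) (- r / knorm s r)) (kelt s r) = q1.
Proof.
move=> nN; rewrite kelt_mul -kelt10; congr kelt; move: nN; rewrite /knorm => nN; field => //.
Qed.

Lemma kelt_mul_eq0 s r y : qmul (kelt s r) y = 0 -> kelt s r = 0 \/ y = 0.
Proof.
case: (boolP ((s != 0) || (r != 0))) => [hsr hy | ]; last first.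
  by rewrite negb_or !negbK => /andP [/eqP -> /eqP ->] _; left; rewrite kelt00.
by right; rewrite -[y]qmul1l -(kelt_inv (knorm_neq0 nsq hsr)) -qmulA hy qmul0r.
Qed.

Lemma ucommP x : ucomm x -> exists s r, x = kelt s r.
Proof.
move=> hx; set y := x - qc x 0 *: q1.
have yp : qc y 0 = 0 by rewrite /y !qcE mulr1 subrr.
have yuC : qmul u y = qmul y u.
  by rewrite /y qmulBl qmulBr qmulZl qmulZr qmul1l qmul1r hx.
have yu : qmul y u = (trd (qmul y u) / 2) *: q1.
  have e := pure_mulC_add yp u_pure; rewrite yuC in e.
  by rewrite mulrC -scalerA -e -mulr2n -scaler_nat scalerA mulVf ?two_neq0 ?scale1r.
have ey : y = (d^-1 * (trd (qmul y u) / 2)) *: u.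
  have ey : y = d^-1 *: qmul (qmul y u) u.
    by rewrite -qmulA hu qmulZr qmul1r scalerA mulVf ?d_neq0 ?scale1r.
  by rewrite {1}ey {1}yu qmulZl qmul1l scalerA.
by exists (qc x 0), (d^-1 * (trd (qmul y u) / 2)); rewrite /kelt -ey /y subrKC.
Qed.

Lemma uanti_pure z : uanti z -> qc z 0 = 0.
Proof.
move=> hz; set y := z - qc z 0 *: q1.
have yp : qc y 0 = 0 by rewrite /y !qcE mulr1 subrr.
have e : (- (2 * qc z 0)) *: u = trd (qmul y u) *: q1.
  rewrite -(pure_mulC_add yp u_pure) /y qmulBl qmulBr qmulZl qmulZr qmul1l qmul1r hz; qlin.
have t0 : trd (qmul y u) = 0.
  by have := congr1 (fun p : A => qc p 0) e; rewrite !qcZ u_pure qc1_0 mulr0 mulr1.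
move: e; rewrite t0 scale0r => /eqP; rewrite scaler_eq0 (negbTE u_neq0) orbF oppr_eq0.
by rewrite mulf_eq0 (negbTE two_neq0) => /eqP.
Qed.

Lemma trd_uanti z : uanti z -> trd z = 0.
Proof. by move=> h; rewrite /trd (uanti_pure h) mulr0. Qed.

Lemma uanti_sq z : uanti z -> qmul z z = (- nrd z) *: q1.
Proof. by move=> h; apply: pure_sq; apply: uanti_pure. Qed.

Lemma uantiZ c z : uanti z -> uanti (c *: z).
Proof. by rewrite /uanti => h; rewrite qmulZl qmulZr h scalerN. Qed.

Lemma ucomm_uanti p q : ucomm p -> uanti q -> uanti (qmul p q).
Proof. by move=> hp hq; rewrite /uanti -qmulA hq qmulNr qmulA hp -qmulA. Qed.

Lemma uanti_uanti p q : uanti p -> uanti q -> ucomm (qmul p q).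
Proof. by move=> hp hq; rewrite /ucomm -qmulA hq qmulNr qmulA hp qmulNl opprK -qmulA. Qed.

Lemma u_cpart x : qmul u (cpart x) = 2^-1 *: (qmul u x + qmul x u).
Proof.
rewrite /cpart qmulZr qmulDr qmulZr qmulA hu qmulZl qmul1l.
by rewrite scalerA mulVf ?d_neq0 // scale1r.
Qed.

Lemma cpart_u x : qmul (cpart x) u = 2^-1 *: (qmul u x + qmul x u).
Proof.
rewrite /cpart qmulZl qmulDl qmulZl -!qmulA hu qmulZr qmul1r qmulZr.
by rewrite scalerA mulVf ?d_neq0 // scale1r addrC.
Qed.

Lemma cpart_ucomm x : ucomm (cpart x).
Proof. by rewrite /ucomm u_cpart cpart_u. Qed.

Lemma apart_uanti x : uanti (apart x).
Proof.
rewrite /uanti /apart qmulBl qmulBr cpart_u u_cpart.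
by move: (qmul x u) (qmul u x) => X Y; apply: qext; rewrite !qcE; field; rewrite two_neq0.
Qed.

Lemma cpart_apart x : x = cpart x + apart x.
Proof. by rewrite /apart subrKC. Qed.

Lemma nrd_uanti_neq0 z : uanti z -> z != 0 -> nrd z != 0.
Proof.
move=> hz nz; apply: contraNneq nz => n0; apply/eqP/(trd_form_nondeg two_neq0 a0 b0) => x.
have zz : qmul z z = 0 by rewrite uanti_sq // n0 oppr0 scale0r.
rewrite [x]cpart_apart qmulDl trdD trd_uanti ?add0r; last first.
  by apply: ucomm_uanti => //; apply: cpart_ucomm.
have [s [r ew]] := ucommP (uanti_uanti (apart_uanti x) hz).
have : qmul (kelt s r) z = 0 by rewrite -ew -qmulA zz qmul0r.
by case/kelt_mul_eq0 => [k0|->]; rewrite ?ew ?k0 ?qmul0r trd0.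
Qed.

Lemma kelt_integral s r : intK s r -> integral v a b (kelt s r).
Proof.
case/andP => hs hN; exists [:: knorm s r; - (2 * s)]; split.
  move=> [|[|i]] //= _; apply/OF_vge => //.
  by rewrite vgeN; apply: vgeM0 => //; rewrite vgeE ?two_neq0 // v2.
rewrite /= !big_ord_recr big_ord0 /= add0r qmul1r kelt_mul /kelt /knorm.
by apply: qext; rewrite !qcE; ring.
Qed.

Lemma uanti_div z0 z : uanti z0 -> uanti z -> z0 != 0 -> exists s r, z = qmul (kelt s r) z0.
Proof.
move=> h0 hz nz0; have nn := nrd_uanti_neq0 h0 nz0.
set iz := (- (nrd z0)^-1) *: z0.
have hi : qmul iz z0 = q1.
  by rewrite qmulZl uanti_sq // scalerA mulrN mulNr opprK mulVf // scale1r.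
have aiz : uanti iz by apply: uantiZ.
have [s [r ek]] := ucommP (uanti_uanti hz aiz).
by exists s, r; rewrite -ek -qmulA hi qmul1r.
Qed.

Definition fam4 (p0 p1 p2 p3 : A) : 'I_4 -> A := fun i => [:: p0; p1; p2; p3]`_i.

(* After the unimodular change of basis [r u + q |-> q] the Gram matrix is triangular. *)
Lemma det_Gram_uanti (t r : F) (q : A) : t != 0 -> uanti q ->
  \det (Gram (fam4 q1 (t *: u) (r *: u + q) (qmul (t *: u) (r *: u + q))))
  = - (16 * (t ^+ 2 * d) ^+ 2 * nrd q ^+ 2).
Proof.
move=> nt hq; set lam := t *: u; set dl := t ^+ 2 * d.
have hll : qmul lam lam = dl *: q1 by rewrite /lam qmulZl qmulZr hu !scalerA /dl expr2.
have klam : lam = kelt 0 t by rewrite /lam /kelt scale0r add0r.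
have clam : ucomm lam by rewrite klam; apply: kelt_ucomm.
have alq : uanti (qmul lam q) by apply: ucomm_uanti.
have aql : qmul q lam = - qmul lam q by rewrite /lam qmulZl qmulZr hq scalerN.
pose g := fam4 q1 lam q (qmul lam q).
pose M : 'M[F]_4 := \matrix_(i, j) (nth [::] [:: [:: 1; 0; 0; 0]; [:: 0; 1; 0; 0];
                      [:: 0; r / t; 1; 0]; [:: r / t * dl; 0; 0; 1]] i)`_j.
have hf i : fam4 q1 lam (r *: u + q) (qmul lam (r *: u + q)) i = \sum_j M i j *: g j.
  rewrite !big_ord_recl big_ord0 /M /g /fam4 !mxE.
  have ru : r *: u = (r / t) *: lam by rewrite /lam scalerA divfK.
  case: i => [[|[|[|[|i]]]] hi] //=; rewrite ?scale0r ?scale1r ?addr0 ?add0r ?ru //.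
  by rewrite qmulDr qmulZr hll scalerA.
have trM : is_trig_mx M.
  by apply/is_trig_mxP => -[[|[|[|[|i]]]] hi] [[|[|[|[|j]]]] hj]; rewrite mxE.
have trG : is_trig_mx (Gram g).
  apply/is_trig_mxP => -[[|[|[|[|i]]]] hi] [[|[|[|[|j]]]] hj] //= _; rewrite mxE /g /fam4 /=.
  - by rewrite qmul1l klam trd_kelt mulr0.
  - by rewrite qmul1l trd_uanti.
  - by rewrite qmul1l trd_uanti.
  - by rewrite trd_uanti.
  - by rewrite trd_uanti //; apply: ucomm_uanti.
  - rewrite qmulA aql qmulNl -qmulA uanti_sq // qmulZr qmul1r.
    by rewrite -scaleNr trdZ klam trd_kelt !mulr0.
have detM : \det M = 1 by rewrite det_trig // !big_ord_recr big_ord0 /M !mxE /= !mul1r.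
rewrite (Gram_lin hf) !det_mulmx det_tr detM det_trig // !big_ord_recr big_ord0.
rewrite /Gram !mxE /g /fam4 /= qmul1l trd1 hll.
rewrite !uanti_sq // !trdZ trd1 nrdM klam nrd_kelt /knorm /dl; ring.
Qed.

(** * Orders containing [O_K] *)

Section OrderContainingOK.
Variables (X : A -> Prop) (e : 'I_4 -> A).
Hypothesis hb : is_Obasis v X e.
Hypothesis hmul : forall x y, X x -> X y -> X (qmul x y).
Hypothesis hK : forall s r, intK s r -> X (kelt s r).

Lemma order1 : X q1.
Proof. by rewrite -kelt10; apply: hK; rewrite /intK /knorm vge1 expr1n expr0n mulr0 subr0 vge1. Qed.

Lemma order_qpow z k : X z -> X (qpow a b z k).
Proof. by move=> hz; elim: k => [|k IH] /=; [apply: order1 | apply: hmul]. Qed.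

(* [nrd] is bounded below on [X], so [nrd (x ^ k) = (nrd x) ^ k] forces [nrd x] integral. *)
Lemma order_intK s r : X (kelt s r) -> intK s r.
Proof.
move=> hx; have hN : vge 0 (knorm s r).
  have [-> | nN] := eqVneq (knorm s r) 0; first exact: vge0.
  rewrite vgeE // leNgt; apply/negP => hneg.
  have [C hC] := lattice_nrd_bounded hb; pose k := `|C|%N.+1.
  have := hC _ (order_qpow k hx); rewrite nrd_qpow nrd_kelt vgeE ?expf_neq0 // vX //.
  by rewrite /k -mulr_natr natz; nia.
rewrite /intK hN andbT.
case: (boolP ((s != 0) || (r != 0))) => hsr; last first.
  by move: hsr; rewrite negb_or negbK => /andP [/eqP -> _]; apply: vge0.
case/orP: (intK_or_inv nsq hsr) => /andP [hs _] //.
by rewrite -(divfK (knorm_neq0 nsq hsr) s) vgeM0.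
Qed.

Lemma order_kelt0 t : vge 0 (t ^+ 2 * d) -> X (kelt 0 t).
Proof. by move=> h; apply: hK; rewrite /intK /knorm vge0 expr0n /= sub0r vgeN mulrC. Qed.

(* [t u] is in [X], hence so is [t (u x + x u) = 2 t u cpart(x)], which lies in [F(u)]. *)
Lemma order_cpart_vge x t s r : X x -> cpart x = kelt s r -> vge 0 (t ^+ 2 * d) ->
  vge 0 (2 * t * (d * r)) /\ vge 0 (- (4 * (t ^+ 2 * d)) * knorm s r).
Proof.
move=> hx eP ht.
have hw : X (kelt (2 * t * (d * r)) (2 * t * s)).
  have e2 : qmul u x + qmul x u = 2 *: kelt (d * r) s.
    have -> : kelt (d * r) s = qmul u (cpart x) by rewrite eP /kelt qmulDr !qmulZr qmul1r hu; qlin.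
    by rewrite u_cpart scalerA mulfV ?two_neq0 ?scale1r.
  have -> : kelt (2 * t * (d * r)) (2 * t * s) = qmul (kelt 0 t) x + qmul x (kelt 0 t).
    by rewrite {2 3}/kelt scale0r !add0r qmulZl qmulZr -scalerDr e2 /kelt; qlin.
  by apply: (latticeD hb); apply: hmul => //; apply: order_kelt0.
have /andP [h1 h2] := order_intK hw; split=> //.
by move: h2; rewrite /knorm (_ : _ - _ = - (4 * (t ^+ 2 * d)) * (s ^+ 2 - d * r ^+ 2)) //; ring.
Qed.

Hypothesis hG : 0 < v (\det (Gram e)).

(* In the ramified case the lattice spanned by [1, t u, x', t u x'] would have a unit
   discriminant, while every sublattice of [X] has discriminant in [pi^(v disc X)]. *)
Lemma order_ramified_contra x t s r : X x -> cpart x = kelt s r -> vge 0 s ->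
  t != 0 -> v (t ^+ 2 * d) = 1 -> d * r ^+ 2 != 0 -> v (d * r ^+ 2) = -1 -> False.
Proof.
move=> hx0 eP hs nt hdl ndr vdr.
have hx : X (r *: u + apart x).
  have -> : r *: u + apart x = x - s *: q1 by rewrite /apart eP /kelt; qlin.
  apply: (latticeB hb) => //; rewrite -[s *: q1]addr0 -(scale0r u); apply: hK.
  by rewrite /intK /knorm hs expr0n /= mulr0 subr0 vgeX0.
move: (apart_uanti x) hx; move: (apart x) => q hq hx.
have ndl : t ^+ 2 * d != 0 by rewrite mulf_neq0 ?expf_neq0 ?d_neq0.
have Xlam : X (t *: u).
  by rewrite -[t *: u]add0r -(scale0r q1); apply: order_kelt0; rewrite vgeE // hdl.
have ex2 : qmul (r *: u + q) (r *: u + q) = kelt (d * r ^+ 2 - nrd q) 0.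
  by rewrite qmulDl !qmulDr !qmulZl !qmulZr hu hq (uanti_sq hq) /kelt; qlin.
have := hmul hx hx; rewrite ex2 => /order_intK /andP [hq2 _].
have [nq vq] : nrd q != 0 /\ v (nrd q) = -1.
  have hy : vge (v (d * r ^+ 2) + 1) (- (d * r ^+ 2 - nrd q)) by rewrite vdr vgeN.
  by have := vD_strict ndr hy; rewrite opprB subrKC vdr.
have hf i : X (fam4 q1 (t *: u) (r *: u + q) (qmul (t *: u) (r *: u + q)) i).
  by case: i => [[|[|[|[|i]]]] hi] //=; rewrite /fam4 /=; auto using order1.
have := vge_det_Gram hb hf; rewrite det_Gram_uanti // vgeN (_ : 16 = 2 ^+ 4); last by ring.
rewrite vgeE ?mulf_neq0 ?expf_neq0 ?two_neq0 ?d_neq0 //.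
rewrite !vM ?mulf_neq0 ?expf_neq0 ?two_neq0 ?d_neq0 //.
move: hG hdl; rewrite v2 vq vM ?expf_neq0 ?d_neq0 // vX //; lia.
Qed.

Lemma order_cpart x : X x -> X (cpart x).
Proof.
move=> hx; have [t nt ht] := exists_vsq_scale d_neq0.
have [s [r eP]] := ucommP (cpart_ucomm x); rewrite eP; apply: hK.
have hdl0 : vge 0 (t ^+ 2 * d) by rewrite vgeE ?mulf_neq0 ?expf_neq0 ?d_neq0 //; case: ht => ->.
have [hsg hN] := order_cpart_vge hx eP hdl0.
have [// | [hdl nD vD hs]] := intK_or_ramified nsq nt ht hsg hN.
by case: (order_ramified_contra hx eP hs nt hdl nD vD).
Qed.

Lemma order_sub_of_uanti (Y : A -> Prop) (e' : 'I_4 -> A) : is_Obasis v Y e' ->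
  (forall s r, intK s r -> Y (kelt s r)) -> (forall z, uanti z -> X z -> Y z) ->
  forall x, X x -> Y x.
Proof.
move=> hbY hKY hXY x hx; have [s [r eP]] := ucommP (cpart_ucomm x).
rewrite [x]cpart_apart; apply: (latticeD hbY).
  by rewrite eP; apply/hKY/order_intK; rewrite -eP; apply: order_cpart.
by apply: hXY; [apply: apart_uanti | apply: (latticeB hb) => //; apply: order_cpart].
Qed.

End OrderContainingOK.

Section TwoOrders.
Variables (X Y : A -> Prop) (e e' : 'I_4 -> A).
Hypotheses (hbX : is_Obasis v X e) (hbY : is_Obasis v Y e').
Hypothesis hmulX : forall x y, X x -> X y -> X (qmul x y).
Hypothesis hmulY : forall x y, Y x -> Y y -> Y (qmul x y).
Hypothesis hKX : forall s r, intK s r -> X (kelt s r).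
Hypothesis hKY : forall s r, intK s r -> Y (kelt s r).

(* The anticommuting parts are lattices over the valuation ring [O_K] in a line over [K]. *)
Lemma uanti_parts_total : (forall z, uanti z -> X z -> Y z) \/ (forall z, uanti z -> Y z -> X z).
Proof.
case: (classic (exists z0, [/\ uanti z0, X z0 & ~ Y z0])) => [[z0 [az0 Xz0 nYz0]] | hno].
  2: by left => z az Xz; apply: NNPP => nYz; apply: hno; exists z.
right => z az Yz.
have nz0 : z0 != 0 by apply: contra_not_neq nYz0 => ->; apply: (lattice0 hbY).
have [s [r ez]] := uanti_div az0 az nz0; rewrite ez in Yz *.
case: (boolP ((s != 0) || (r != 0))) => hsr; last first.
  move: hsr; rewrite negb_or !negbK => /andP [/eqP -> /eqP ->].
  by rewrite kelt00 qmul0l; apply: (lattice0 hbX).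
case/orP: (intK_or_inv nsq hsr) => [/hKX hk | /hKY hk]; first exact: hmulX.
by exfalso; apply: nYz0; rewrite -[z0]qmul1l -(kelt_inv (knorm_neq0 nsq hsr)) -qmulA; apply: hmulY.
Qed.

Lemma orders_eq : 0 < v (\det (Gram e)) -> 0 < v (\det (Gram e')) ->
  \det (Gram e) != 0 -> \det (Gram e') != 0 -> v (\det (Gram e)) = v (\det (Gram e')) ->
  forall x, X x <-> Y x.
Proof.
move=> hGX hGY nX nY hv x; case: uanti_parts_total => [hXY | hYX].
  have XY := order_sub_of_uanti hbX hmulX hKX hGX hbY hKY hXY.
  by split; [apply: XY | apply: (sublattice_eq hbX hbY XY nX hv)].
have YX := order_sub_of_uanti hbY hmulY hKY hGY hbX hKX hYX.
by split; [apply: (sublattice_eq hbY hbX YX nY (esym hv)) | apply: YX].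
Qed.

End TwoOrders.

Lemma optimal_kelt (Z : A -> Prop) : (forall y, phiK u y -> (Z y <-> integral v a b y)) ->
  forall s r, intK s r -> Z (kelt s r).
Proof. by move=> hZ s r hsr; apply/(hZ _ _)/kelt_integral => //; exists s, r. Qed.

Lemma conj_order_eq (O : A -> Prop) (e : 'I_4 -> A) (g h : A) :
  is_Obasis v O e -> (forall x y, O x -> O y -> O (qmul x y)) ->
  (forall y, phiK u y -> (O y <-> integral v a b y)) ->
  0 < v (\det (Gram e)) -> \det (Gram e) != 0 -> qmul h g = q1 ->
  (forall y, phiK u y -> ((exists x, O x /\ y = qmul (qmul g x) h) <-> integral v a b y)) ->
  forall y, (exists x, O x /\ y = qmul (qmul g x) h) <-> O y.
Proof.
move=> hb hmul hopt hG hdet hhg hE.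
have hmulE x y : (exists x', O x' /\ x = qmul (qmul g x') h) ->
    (exists y', O y' /\ y = qmul (qmul g y') h) ->
    exists z, O z /\ qmul x y = qmul (qmul g z) h.
  by move=> [x' [hx ->]] [y' [hy ->]]; exists (qmul x' y'); rewrite conj_mul //; split; auto.
apply: (orders_eq (conj_Obasis hhg hb) hb hmulE hmul (optimal_kelt hE) (optimal_kelt hopt));
  by rewrite ?Gram_conj.
Qed.

End QuadraticSubalgebra.
End LocalField.
End QuaternionOrders.

Theorem lemma4p2p1 (F : fieldType) (v : F -> int) (a b : F)
    (O : 'rV[F]_4 -> Prop) (d : F) (u : 'rV[F]_4) :
  nonarch_local_field v -> nondyadic v -> a != 0 -> b != 0 ->
  Bass v a b O -> eichler_zero v a b O ->
  (exists n : int, nrd_disc_val v a b O n /\ 3 <= n) ->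
  (forall t : F, t ^+ 2 != d) ->
  optimal_emb v a b d O u ->
  (forall c : F, (exists g, in_normalizer a b O g /\ nrd a b g = c) <-> normK d c) ->
  forall c : F, (exists g, in_E v a b O u g /\ nrd a b g = c) <-> normK d c.
Proof.
move=> [Hdv Hcomp _] Hnd a0 b0 [[_ [_ hmul]] _] _ [n [[e [hb [hdet hv]]] hn]] nsq [hu hopt].
move=> Hnorm c; have hG : 0 < v (\det (Gram a b e)) by rewrite /Gram hv; lia.
split=> [[g [[h [hgh [hhg hE]]] <-]] | /Hnorm [g [[h [hgh [hhg hN]]] <-]]].
  apply/Hnorm; exists g; split=> //; exists h; do 2!split=> //.
  exact: (conj_order_eq Hdv Hnd Hcomp a0 b0 hu nsq hb hmul hopt hG hdet hhg hE).
exists g; split=> //; exists h; do 2!split=> //.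
by move=> y hy; rewrite hN; apply: hopt.
Qed.
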